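(* Let $a:\mathbb R^d\to\mathcal S_d^+$ be continuous with $\|a(x)\|\le\Lambda$ and $\operatorname{Tr}a(x)\ge\lambda$ for all $x$, and assume the martingale problem for $L$ is well-posed, with solutions $(\mathbb P^x)_{x\in\mathbb R^d}$. Let $(x_n)_{n\ge1}$ be a dense sequence in $\mathbb R^d$ and define the measure $\mathfrak m(B):=\sum_{n\ge1}2^{-n}R_1\mathbf 1_B(x_n)$ for Borel $B\subset\mathbb R^d$. If $B$ is a Borel set with $\mathfrak m(B)=0$, then $\mathbb R^d\setminus B$ is dense in $\mathbb R^d$.
   Context: Fix $d\ge1$, $\alpha\in(0,2)$, $\lambda,\Lambda>0$. $\mathcal S_d^+$: symmetric non-negative definite real $d\times d$ matrices, $\|a\|=\sum|a_{ij}|$. $Lu(x)=\frac12\int_{\mathbb R^d}[u(x+z)+u(x-z)-2u(x)]\frac{\langle a(x)z,z\rangle}{|z|^{d+\alpha+2}}dz$ on $C_c^2(\mathbb R^d)$. $\mathcal D$: Skorokhod space of càdlàg paths, $X_t$ canonical process, $\mathcal F_t=\sigma(X_s,s\le t)$. Well-posedness: for every Borel probability $\nu$ on $\mathbb R^d$ a unique probability on $\mathcal D$ with $X_0\sim\nu$ and $f(X_t)-f(X_0)-\int_0^tLf(X_r)dr$ an $(\mathcal F_t)$-martingale for all $f\in C_c^\infty$; $\mathbb P^x$ the solution with $\nu=\delta_x$. $R_1f(x)=\mathbb E^x\int_0^\infty e^{-t}f(X_t)\,dt$ for bounded Borel $f$. *)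

From HB Require Import structures.
From mathcomp Require Import all_boot all_order all_algebra.
From mathcomp Require Import all_classical all_reals all_analysis.

Set Implicit Arguments.
Unset Strict Implicit.
Unset Printing Implicit Defensive.
Import Order.TTheory GRing.Theory Num.Theory.
Import numFieldNormedType.Exports.
Local Open Scope classical_set_scope.
Local Open Scope ring_scope.

Section Defs.
Context {R : realType} {d : nat}.

Notation vec := 'rV[R]_d.

Definition enorm (z : vec) : R := Num.sqrt (\sum_(i < d) z ord0 i ^+ 2).
Definition qform (A : 'M[R]_d) (z : vec) : R :=
  \sum_(i < d) \sum_(j < d) A i j * z ord0 i * z ord0 j.
Definition mxnorm1 (A : 'M[R]_d) : R := \sum_(i < d) \sum_(j < d) `|A i j|.
Definition psd_sym (A : 'M[R]_d) : Prop :=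
  A^T = A /\ forall z : vec, 0 <= qform A z.

Definition Rd := g_sigma_algebraType (@open vec).
HB.instance Definition _ := Pointed.on Rd.
HB.instance Definition _ := Measurable.on Rd.

(** Lebesgue integral on R^d, defined by iterated one-dimensional Lebesgue
    integration (Tonelli) of the positive and negative parts. *)
Fixpoint iint (n : nat) (g : (nat -> R) -> \bar R) : \bar R :=
  match n with
  | 0%N => g (fun _ => 0)
  | n'.+1 => integral (@lebesgue_measure R) setT
      (fun t : R => iint n' (fun y => g (fun k => if k == n' then t else y k)))
  end.
Definition lebint (g : vec -> R) : \bar R :=
  (iint d (fun y => (Num.max (g (\row_i y i)) 0)%:E)
   - iint d (fun y => (Num.max (- g (\row_i y i)) 0)%:E))%E.

Definition evec (i : 'I_d) : vec := delta_mx ord0 i.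
Definition iter_partial (s : seq 'I_d) (f : vec -> R) : vec -> R :=
  foldr (fun i g => derive g ^~ (evec i)) f s.
Definition smooth_c (f : vec -> R) : Prop :=
  (forall s : seq 'I_d, continuous (iter_partial s f) /\
     forall x i, derivable (iter_partial s f) x (evec i))
  /\ compact (closure [set x | f x != 0]).

Definition Lop (a : vec -> 'M[R]_d) (alpha : R) (f : vec -> R) (x : vec) : R :=
  2^-1 * fine (lebint (fun z =>
     (f (x + z) + f (x - z) - 2 * f x) * qform (a x) z
       / (enorm z `^ (d%:R + alpha + 2)))).

(** Skorokhod space of cadlag paths [0,oo) -> R^d; paths are extended to
    negative times by their value at 0, so that D is in bijection with the
    usual space of cadlag paths on [0, oo). *)
Definition cadlag (w : R -> vec) : Prop :=
  [/\ forall t, 0 <= t -> w s @[s --> t^'+] --> w t,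
      forall t, 0 < t -> exists l : vec, w s @[s --> t^'-] --> l
    & forall t, t < 0 -> w t = w 0].

Lemma cadlag_cst0 : cadlag (fun _ => 0).
Proof.
split.
- by move=> t _; exact: cvg_cst.
- by move=> t _; exists 0; exact: cvg_cst.
- by [].
Qed.

Record Dpath := MkDpath { dpath : R -> vec ; dpath_cadlag : cadlag dpath }.

HB.instance Definition _ := gen_eqMixin Dpath.
HB.instance Definition _ := gen_choiceMixin Dpath.
HB.instance Definition _ := isPointed.Build Dpath (MkDpath cadlag_cst0).

Definition X (t : R) (w : Dpath) : vec := dpath w t.

Definition gen_upto (t : R) : set (set Dpath) :=
  [set A | exists s (B : set Rd), [/\ 0 <= s <= t, measurable B & A = X s @^-1` B]].
Definition gen_all : set (set Dpath) :=
  [set A | exists s (B : set Rd), [/\ 0 <= s, measurable B & A = X s @^-1` B]].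
Definition Ft (t : R) : set (set Dpath) := <<s gen_upto t >>.

Definition Omega := g_sigma_algebraType gen_all.
HB.instance Definition _ := Pointed.on Omega.
HB.instance Definition _ := Measurable.on Omega.

Definition martingale (P : probability Omega R) (M : R -> Omega -> R) : Prop :=
  forall t, 0 <= t ->
    [/\ (forall B : set R, measurable B -> Ft t (M t @^-1` B)),
        P.-integrable setT (fun w => (M t w)%:E)
      & forall s (A : set Omega), 0 <= s <= t -> Ft s A ->
          (\int[P]_(w in A) (M t w)%:E = \int[P]_(w in A) (M s w)%:E)%E].

Definition MP_mart (a : vec -> 'M[R]_d) (alpha : R) (f : vec -> R)
  (t : R) (w : Omega) : R :=
  f (X t w) - f (X 0 w)
  - fine (\int[@lebesgue_measure R]_(r in `[0%R, t]%classic) (Lop a alpha f (X r w))%:E)%E.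

Definition solves_MP (a : vec -> 'M[R]_d) (alpha : R) (P : probability Omega R)
  (nu : set Rd -> \bar R) : Prop :=
  (forall B : set Rd, measurable B -> P (X 0 @^-1` B) = nu B) /\
  (forall f : vec -> R, smooth_c f -> martingale P (MP_mart a alpha f)).

Definition well_posed (a : vec -> 'M[R]_d) (alpha : R) : Prop :=
  forall nu : probability Rd R,
    (exists P, solves_MP a alpha P nu) /\
    (forall P Q, solves_MP a alpha P nu -> solves_MP a alpha Q nu ->
       forall A : set Omega, measurable A -> P A = Q A).

Definition R1ind (Px : vec -> probability Omega R) (B : set vec) (x : vec)
  : \bar R :=
  (\int[Px x]_w \int[@lebesgue_measure R]_(t in `[0%R, +oo[%classic)
       (expR (- t) * \1_B (X t w))%:E)%E.

(** the measure m(B) = sum_{n>=1} 2^-n R_1 1_B (x_n), with x_n = xs n.-1 *)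
Definition frak_m (Px : vec -> probability Omega R) (xs : nat -> vec)
  (B : set vec) : \bar R :=
  (\sum_(0 <= n <oo) ((2%:R ^- n.+1)%:E * R1ind Px B (xs n)))%E.

End Defs.

From HB Require Import structures.
From mathcomp Require Import all_boot all_order all_algebra.
From mathcomp Require Import all_classical all_reals all_analysis.
Import Order.TTheory GRing.Theory Num.Theory.
Import numFieldNormedType.Exports.
Local Open Scope classical_set_scope.
Local Open Scope ring_scope.

(* If B contained a nonempty open set, it would contain a closed ball C around
   some x_n.  Under P^{x_n} the path starts in the interior of C, so by right
   continuity it stays in C during [0, r) for some r > 0 with positive
   probability.  On that event it spends time at least r in B, hence
   R_1 1_B(x_n) >= r e^{-r} P^{x_n}(stays in C on [0, r)) > 0 and m(B) > 0. *)

(* No measurability of f is needed: the bound is witnessed by the simple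
   function c 1_A below f. *)
Lemma mule_measure_le_integral d (T : measurableType d) (R : realType)
    (mu : {measure set T -> \bar R}) (D A : set T) (f : T -> \bar R) (c : R) :
  measurable A -> 0 <= c -> A `<=` D ->
  (forall x, D x -> (0 <= f x)%E) -> (forall x, A x -> (c%:E <= f x)%E) ->
  (c%:E * mu A <= \int[mu]_(x in D) f x)%E.
Proof.
move=> mA c0 AD f0 fA; rewrite ge0_integralE//.
apply: ereal_sup_ubound; exists (scale_nnsfun (indic_nnsfun R mA) c0).
  move=> x /=; rewrite /patch measurable_realfun.mindicE.
  case: ifPn => [|/negP]; rewrite inE => Dx.
    by case: (boolP (x \in A)) => [/set_mem/fA|_]; rewrite ?mulr1 ?mulr0 ?f0.
  by rewrite memNset ?mulr0// => /AD.
by rewrite /= sintegralrM sintegral_indic.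
Qed.

Lemma right_cvg_open_itv {R : realType} {T : topologicalType} {f : R -> T} {t}
    {V : set T} :
  f s @[s --> t^'+] --> f t -> open V -> V (f t) ->
  exists2 e, 0 < e & forall s, t < s < t + e -> V (f s).
Proof.
move=> ft oV Vft.
have /nbhs_ballP[e /= e0 fV] : (f @ t^'+) V by apply: ft; exact: open_nbhs_nbhs.
exists e => // s /andP[ts se]; apply: fV => //=.
rewrite -ball_normE /ball_ /= ltr_distlC se andbT.
by rewrite (le_lt_trans _ ts)// lerBlDr lerDl ltW.
Qed.

Lemma measure_cover_gt0 d (T : measurableType d) (R : realType)
    (mu : {measure set T -> \bar R}) (A : set T) (F : (set T)^nat) :
  measurable A -> (forall k, measurable (F k)) -> A `<=` \bigcup_k F k ->
  (0 < mu A)%E -> exists k, (0 < mu (F k))%E.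
Proof.
move=> mA mF AF muA; apply: contrapT => /forallNP F0.
have muF0 k : mu (F k) = 0%E.
  by apply/eqP; rewrite eq_le measure_ge0 andbT leNgt; apply/negP/F0.
have := @measure_sigma_subadditive _ _ _ mu A F mF mA AF.
rewrite eseries0 => [|k _ _]; last exact: muF0.
by rewrite leNgt muA.
Qed.

Lemma nneseries_gt0 (R : realType) (u : (\bar R)^nat) n :
  (forall k, (0 <= u k)%E) -> (0 < u n)%E -> (0 < \sum_(0 <= k <oo) u k)%E.
Proof.
move=> u0 un; rewrite (@nneseriesD1 _ _ n xpredT)//.
by apply: lte_paddr => //; apply: nneseries_ge0.
Qed.

Section canonical_process.
Context {R : realType} {d : nat}.
Notation vec := 'rV[R]_d.

Definition stays_in (C : set vec) (r : R) : set (@Omega R d) :=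
  [set w | forall t, 0 <= t < r -> C (X t w)].

Lemma measurable_X_closed (C : set vec) t : closed C -> 0 <= t ->
  measurable (X t @^-1` C : set (@Omega R d)).
Proof.
move=> cC t0; apply: sub_sigma_algebra; exists t, C; split => //.
rewrite -[C]setCK; apply: measurableC; apply: sub_sigma_algebra.
exact: closed_openC.
Qed.

(* By right continuity and closedness of C, the event only depends on the path
   at rational times, which makes it measurable. *)
Lemma stays_in_ratE (C : set vec) r : closed C ->
  stays_in C r =
  \bigcap_(q : rat) [set w | 0 <= (ratr q : R) < r -> C (X (ratr q) w)].
Proof.
move=> cC; apply/seteqP; split => [w Cw q _ /Cw //|w Cq t /andP[t0 tr]].
apply: contrapT => nCt; have [rc _ _] := dpath_cadlag w.
have [e e0 nC] := right_cvg_open_itv (rc t t0) (closed_openC cC) nCt.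
have [q] : exists q, ratr q \in `]t, Num.min (t + e) r[.
  by apply: rat_in_itvoo; rewrite lt_min ltrDl e0.
rewrite in_itv /= lt_min => /andP[tq /andP[qte qr]].
apply: (nC (ratr q)); first by rewrite tq.
by apply: Cq => //; rewrite qr (le_trans t0) ?ltW.
Qed.

Lemma measurable_stays_in (C : set vec) r :
  closed C -> measurable (stays_in C r).
Proof.
move=> cC; rewrite stays_in_ratE// -[X in measurable X]setCK setC_bigcap.
apply/measurableC/bigcupT_measurable_rat => q; apply: measurableC.
have [qr|nqr] := boolP (0 <= ratr q < r).
  rewrite (_ : [set w | _] = X (ratr q) @^-1` C); last first.
    by apply/seteqP; split => w /=; [apply|].
  by apply: measurable_X_closed => //; case/andP: qr.
by rewrite (_ : [set w | _] = setT)//; apply/seteqP; split => w // _ /negP.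
Qed.

Lemma stays_in_cover (C V : set vec) : open V -> V `<=` C ->
  X 0 @^-1` V `<=` \bigcup_k stays_in C k.+1%:R^-1.
Proof.
move=> oV VC w /= V0; have [rc _ _] := dpath_cadlag w.
have [e e0 Ve] := right_cvg_open_itv (rc 0 (lexx 0)) oV V0.
have [N _ /(_ N (leqnn N)) Ne] := near_infty_natSinv_lt (PosNum e0).
exists N => // t /andP[]; rewrite le_eqVlt => /orP[/eqP <- _|t0 tN].
  exact: VC.
by apply/VC/Ve; rewrite t0 add0r (lt_trans tN).
Qed.

Implicit Types (Px : vec -> probability (@Omega R d) R) (B C : set vec).

Lemma discounted_occupation_ge B (g : R -> vec) r : 0 < r ->
  (forall t, 0 <= t < r -> B (g t)) ->
  ((r * expR (- r))%:E <= \int[@lebesgue_measure R]_(t in `[0%R, +oo[%classic)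
      (expR (- t) * \1_B (g t))%:E)%E.
Proof.
move=> r0 gB; have -> : (r * expR (- r))%:E =
    ((expR (- r))%:E * @lebesgue_measure R `[0%R, r[%classic)%E.
  by rewrite lebesgue_measure_itv /= lte_fin r0 oppr0 adde0 EFinM muleC.
apply: mule_measure_le_integral => //.
- by move=> t /=; rewrite !in_itv /= => /andP[->].
move=> t /=; rewrite in_itv /= => /andP[t0 tr].
rewrite indicE mem_set; last by apply: gB; rewrite t0.
by rewrite mulr1 lee_fin ler_expR lerN2 ltW.
Qed.

Lemma R1ind_ge0 Px B x : (0 <= R1ind Px B x)%E.
Proof.
apply: integral_ge0 => w _; apply: integral_ge0 => t _.
by rewrite lee_fin mulr_ge0 ?expR_ge0.
Qed.

Lemma R1ind_ge_stays_in Px B C x r : closed C -> C `<=` B -> 0 < r ->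
  ((r * expR (- r))%:E * Px x (stays_in C r) <= R1ind Px B x)%E.
Proof.
move=> cC CB r0; apply: mule_measure_le_integral => //.
- exact: measurable_stays_in.
- by rewrite mulr_ge0 ?expR_ge0 ?ltW.
- by move=> w _; apply: integral_ge0 => t _; rewrite lee_fin mulr_ge0 ?expR_ge0.
by move=> w Cw; apply: discounted_occupation_ge => // t /Cw /CB.
Qed.

Lemma R1ind_gt0 Px B x :
  (forall D : set (@Rd R d), measurable D ->
     Px x (X 0 @^-1` D) = @dirac _ (@Rd R d) (x : @Rd R d) R D) ->
  nbhs x B -> (0 < R1ind Px B x)%E.
Proof.
move=> X0x /nbhs_closedballP[r CB]; set e := r%:num in CB.
have e0 : 0 < e by rewrite /e.
have oV : open (ball x e) by exact: ball_open.
have cC : closed (closed_ball x e) by exact: closed_ball_closed.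
have mX0V : measurable (X 0 @^-1` ball x e : set (@Omega R d)).
  apply: sub_sigma_algebra; exists 0, (ball x e); split => //.
  exact: sub_sigma_algebra.
have PV : (0 < Px x (X 0 @^-1` ball x e))%E.
  rewrite X0x; last exact: sub_sigma_algebra.
  by rewrite diracE mem_set ?lte01//; exact: ballxx.
have [k Pk] := @measure_cover_gt0 _ _ _ (Px x) _ _ mX0V
  (fun k => measurable_stays_in _ k.+1%:R^-1 cC)
  (stays_in_cover _ _ oV (@subset_closed_ball _ _ x e)) PV.
apply: lt_le_trans (R1ind_ge_stays_in Px _ _ x k.+1%:R^-1 cC CB _) => //.
by rewrite mule_gt0// lte_fin mulr_gt0 ?expR_gt0.
Qed.

Lemma frak_m_gt0 Px xs B n :
  (0 < R1ind Px B (xs n))%E -> (0 < frak_m Px xs B)%E.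
Proof.
move=> R1n; apply: (@nneseries_gt0 _ _ n) => [k|].
  by rewrite mule_ge0 ?R1ind_ge0// lee_fin invr_ge0 exprn_ge0.
by rewrite mule_gt0// lte_fin invr_gt0 exprn_gt0.
Qed.

End canonical_process.

Theorem propositionB1 (R : realType) (d : nat) (alpha lam Lam : R)
  (a : 'rV[R]_d -> 'M[R]_d)
  (Px : 'rV[R]_d -> probability (@Omega R d) R)
  (xs : nat -> 'rV[R]_d) (B : set (@Rd R d)) :
  (1 <= d)%N -> 0 < alpha < 2 -> 0 < lam -> 0 < Lam ->
  continuous a ->
  (forall x, psd_sym (a x)) ->
  (forall x, mxnorm1 (a x) <= Lam) ->
  (forall x, lam <= \tr (a x)) ->
  well_posed a alpha ->
  (forall x, solves_MP a alpha (Px x) (@dirac _ (@Rd R d) (x : @Rd R d) R)) ->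
  dense (range xs) ->
  measurable B ->
  frak_m Px xs B = 0%E ->
  dense (~` (B : set 'rV[R]_d)).
Proof.
(* Only the initial laws of the P^x and the right continuity of paths matter. *)
move=> _ _ _ _ _ _ _ _ _ Px_start dense_xs _ m0.
apply: contrapT => /denseNE [U [[x [oU Ux]] UnB0]].
have UB : U `<=` B.
  by move=> y Uy; apply: contrapT => nBy; rewrite -[False]/(set0 y) -UnB0.
have [y [Uy [n _ xs_n]]] := dense_xs U (ex_intro _ x Ux) oU; subst y.
have /frak_m_gt0 : (0 < R1ind Px B (xs n))%E.
  apply: R1ind_gt0; first exact: (Px_start (xs n)).1.
  by apply: filterS UB _; exact: open_nbhs_nbhs.
by rewrite m0 ltxx.
Qed.
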